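(* Let $G$ be the direct sum of groups $\langle a_n\rangle$, $n\in\omega$, each of order $2$. Then $(a_n)_{n\in\omega}$ is a $T$-sequence on $G$, and the canonical bijection $F\mapsto\sum_{i\in F}a_i$ from the Hamming space $\mathbb{H}$ onto $(G,\mathcal{C}_{\tau(a_n)})$ is an asymorphism.
   Context: A sequence $(a_n)$ in an abelian group $G$ is a $T$-sequence if there is a Hausdorff group topology on $G$ in which $(a_n)\to0$; $\tau(a_n)$ is the strongest group topology on $G$ in which $(a_n)\to0$, and $\mathcal{C}_{\tau(a_n)}$ is the group ideal of precompact subsets of $(G,\tau(a_n))$, defining the coarse structure with base $\{\{(x,y):x\in A+y\}:A\in\mathcal{C}_{\tau(a_n)}\}$. The Hamming space $\mathbb{H}$ is the set of finite subsets of $\omega$ with metric $h(F,H)=|F\triangle H|$, with coarse structure generated by $\{(x,y):h(x,y)\le r\}$, $r\ge 0$. An asymorphism is a bijection $f$ such that $f$ and $f^{-1}$ are macro-uniform, where $f:(X,\mathcal{E})\to(X',\mathcal{E}')$ is macro-uniform if for each $E\in\mathcal{E}$ there is $E'\in\mathcal{E}'$ with $f(E[x])\subseteq E'[f(x)]$ for all $x$. *)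

From HB Require Import structures.
From mathcomp Require Import all_boot all_order all_algebra.
Set Implicit Arguments. Unset Strict Implicit. Unset Printing Implicit Defensive.
Import GRing.Theory.
Local Open Scope ring_scope.

Section Top.
Variable G : zmodType.

Definition is_topology (T : (G -> Prop) -> Prop) : Prop :=
  T (fun _ => True) /\
  (forall U V, T U -> T V -> T (fun x => U x /\ V x)) /\
  (forall F : (G -> Prop) -> Prop, (forall U, F U -> T U) ->
      T (fun x => exists U, F U /\ U x)).

Definition group_topology (T : (G -> Prop) -> Prop) : Prop :=
  is_topology T /\
  (forall x y U, T U -> U (x + y) ->
     exists V W, [/\ T V, T W, V x, W y &
       forall v w, V v -> W w -> U (v + w)]) /\
  (forall x U, T U -> U (- x) ->
     exists V, [/\ T V, V x & forall v, V v -> U (- v)]).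

Definition hausdorff (T : (G -> Prop) -> Prop) : Prop :=
  forall x y, x <> y -> exists U V, [/\ T U, T V, U x, V y &
     forall z, U z -> V z -> False].

Definition converges (T : (G -> Prop) -> Prop) (a : nat -> G) (l : G) : Prop :=
  forall U, T U -> U l -> exists N, forall n, (N <= n)%N -> U (a n).

Definition T_sequence (a : nat -> G) : Prop :=
  exists T, [/\ group_topology T, hausdorff T & converges T a 0].

Definition is_tau (a : nat -> G) (T : (G -> Prop) -> Prop) : Prop :=
  [/\ group_topology T, converges T a 0 &
      forall T', group_topology T' -> converges T' a 0 ->
                 forall U, T' U -> T U].

Definition precompact (T : (G -> Prop) -> Prop) (A : G -> Prop) : Prop :=
  forall U, T U -> U 0 ->
    exists s : seq G, forall x, A x -> exists2 g, g \in s & U (x - g).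

(* base of the coarse structure on G given by the ideal C_T of
   precompact subsets: {(x,y) : x ∈ A + y}, A ∈ C_T *)
Definition group_coarse_base (T : (G -> Prop) -> Prop) (E : G -> G -> Prop)
  : Prop :=
  exists A, precompact T A /\
    forall x y, E x y <-> exists2 z, A z & x = z + y.

End Top.

(* Every entourage is
   contained in a base entourage, so it suffices to quantify over bases. *)
Definition macro_uniform (X Y : Type) (BX : (X -> X -> Prop) -> Prop)
  (BY : (Y -> Y -> Prop) -> Prop) (f : X -> Y) : Prop :=
  forall E, BX E -> exists2 E', BY E' & forall x y, E x y -> E' (f x) (f y).

Definition asymorphism (X Y : Type) (BX : (X -> X -> Prop) -> Prop)
  (BY : (Y -> Y -> Prop) -> Prop) (f : X -> Y) : Prop :=
  exists g : Y -> X, [/\ cancel f g, cancel g f,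
     macro_uniform BX BY f & macro_uniform BY BX g].

(** * The Hamming space: finite subsets of omega, as strictly increasing lists *)
Definition finset_nat := {s : seq nat | sorted ltn s}.

Definition hamming (F H : finset_nat) : nat :=
  (count (fun x => x \notin sval H) (sval F) +
   count (fun x => x \notin sval F) (sval H))%N.

(* base {(x,y) : h(x,y) <= r}, r >= 0 (h is integer-valued, so r : nat) *)
Definition hamming_base (E : finset_nat -> finset_nat -> Prop) : Prop :=
  exists r : nat, forall F H, E F H <-> (hamming F H <= r)%N.

Definition canon (G : zmodType) (a : nat -> G) (F : finset_nat) : G :=
  \sum_(i <- sval F) a i.

From HB Require Import structures.
From mathcomp Require Import all_boot all_order all_algebra.
From Stdlib Require Import Classical ClassicalEpsilon.
From mathcomp Require Import zify.
Import GRing.Theory.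
Local Open Scope ring_scope.

(* 1. A family of symmetric "neighbourhoods of 0" closed under halving and
      finite meets generates a group topology (section NeighbourhoodTopology).
   2. In any group topology with a_n -> 0, the sums of at most r of the a_n
      form a precompact set (section ShortSums).
   3. The Protasov-Zelenyuk sets tau_nbhs n (sums in which, for every k, at
      most k indices lie below n k) are such a family; the topology tau_top
      they generate is Hausdorff with a_n -> 0, so (a_n) is a T-sequence.
      Since tau(a_n) is finer than tau_top, every tau(a_n)-precompact set
      has supports of bounded size.
   4. As canon F + canon H is the sum over the symmetric difference of F and
      H, Hamming balls of radius r correspond to translates of sums of at most
      r generators, and 2. and 3. show that the canonical bijection and its
      inverse are macro-uniform. *)

Section NeighbourhoodTopology.
Context {G : zmodType} {I : Type} (W : I -> G -> Prop) (i0 : I).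
Hypothesis W0 : forall i, W i 0.
Hypothesis WN : forall i x, W i x -> W i (- x).
Hypothesis Whalf : forall i, exists j, forall x y, W j x -> W j y -> W i (x + y).
Hypothesis Wmeet : forall i i', exists j, forall x, W j x -> W i x /\ W i' x.

Definition nbhs_top : (G -> Prop) -> Prop :=
  fun U => forall x, U x -> exists i, forall w, W i w -> U (x + w).

(* The interior of x + W i: an open set containing x, inside x + W i. *)
Definition nbhs_ball i (x : G) : G -> Prop :=
  fun u => exists j, forall w, W j w -> W i (u - x + w).

Lemma nbhs_ball_open i x : nbhs_top (nbhs_ball i x).
Proof.
move=> u [j Hj]; have [j' Hj'] := Whalf j.
exists j' => w Hw; exists j' => w' Hw'.
have -> : u + w - x + w' = u - x + (w + w').
  by rewrite -!addrA; congr (_ + _); rewrite addrCA.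
by apply: Hj; apply: Hj'.
Qed.

Lemma nbhs_ball_center i x : nbhs_ball i x x.
Proof. by exists i => w Hw; rewrite subrr add0r. Qed.

Lemma nbhs_ballW {i x u} : nbhs_ball i x u -> W i (u - x).
Proof. by move=> [j Hj]; have := Hj 0 (W0 j); rewrite addr0. Qed.

Lemma nbhs_top_group : group_topology nbhs_top.
Proof.
have shift (x v : G) : x + (v - x) = v by rewrite addrC subrK.
split; [split; [|split]|split].
- by move=> x _; exists i0.
- move=> U V HU HV x [Ux Vx].
  have [i Hi] := HU x Ux; have [i' Hi'] := HV x Vx; have [j Hj] := Wmeet i i'.
  by exists j => w /Hj [w1 w2]; split; [apply: Hi | apply: Hi'].
- move=> F HF x [U [FU Ux]]; have [i Hi] := HF U FU x Ux.
  by exists i => w Hw; exists U; split => //; apply: Hi.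
- move=> x y U HU Uxy; have [i Hi] := HU _ Uxy; have [j Hj] := Whalf i.
  exists (nbhs_ball j x), (nbhs_ball j y).
  split; try exact: nbhs_ball_open; try exact: nbhs_ball_center.
  move=> v w /nbhs_ballW Hv /nbhs_ballW Hw.
  by have := Hi _ (Hj _ _ Hv Hw); rewrite addrACA !shift.
- move=> x U HU Ux; have [i Hi] := HU _ Ux.
  exists (nbhs_ball i x); split; [exact: nbhs_ball_open | exact: nbhs_ball_center |].
  by move=> v /nbhs_ballW /WN /Hi; rewrite opprB addKr.
Qed.

Lemma nbhs_top_hausdorff :
  (forall z, z != 0 -> exists i, ~ W i z) -> hausdorff nbhs_top.
Proof.
move=> Wsep x y /eqP; rewrite -subr_eq0 => /Wsep [i Hi]; have [j Hj] := Whalf i.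
exists (nbhs_ball j x), (nbhs_ball j y).
split; try exact: nbhs_ball_open; try exact: nbhs_ball_center.
move=> z /nbhs_ballW /WN Uz /nbhs_ballW Vz; apply: Hi.
by have := Hj _ _ Vz Uz; rewrite opprB addrC addrA subrK.
Qed.

Lemma nbhs_top_converges (b : nat -> G) :
  (forall i, exists N, forall n, (N <= n)%N -> W i (b n)) ->
  converges nbhs_top b 0.
Proof.
move=> Wb U HU U0; have [i Hi] := HU 0 U0; have [N HN] := Wb i.
by exists N => n /HN /Hi; rewrite add0r.
Qed.

End NeighbourhoodTopology.

Fixpoint words {T : Type} (s : seq T) (r : nat) : seq (seq T) :=
  if r is r'.+1 then [::] :: [seq x :: w | x : T <- s, w : seq T <- words s r']
  else [:: [::]].

Lemma mem_words {T : eqType} (s : seq T) r w :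
  (size w <= r)%N -> {subset w <= s} -> w \in words s r.
Proof.
elim: r w => [|r IH] [|x w] //=; rewrite ?inE // ltnS => Hw ws.
apply/orP; right; apply: (allpairs_f (fun x w => x :: w)).
  by apply: ws; rewrite mem_head.
by apply: IH Hw _ => y yw; apply: ws; rewrite in_cons yw orbT.
Qed.

Section ShortSums.
Context {G : zmodType} (T : (G -> Prop) -> Prop).
Hypothesis gT : group_topology T.

Lemma small_sums_nbhs r U : T U -> U 0 ->
  exists V, [/\ T V, V 0 & forall xs : seq G, (size xs <= r)%N ->
     (forall x, x \in xs -> V x) -> U (\sum_(x <- xs) x)].
Proof.
have [[_ [Tmeet _]] [Tadd _]] := gT.
elim: r U => [|r IH] U HU U0.
  by exists U; split=> // xs; rewrite leqn0 => /nilP -> _; rewrite big_nil.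
have U00 : U (0 + 0) by rewrite addr0.
have [V1 [W1 [TV1 TW1 V10 W10 HVW]]] := Tadd 0 0 U HU U00.
have [V2 [TV2 V20 HV2]] := IH W1 TW1 W10.
exists (fun x => V1 x /\ V2 x); split; [exact: Tmeet | by [] |].
case=> [_ _|x xs]; first by rewrite big_nil.
rewrite /= ltnS big_cons => Hxs Vxs; apply: HVW.
  exact: (Vxs x (mem_head _ _)).1.
by apply: HV2 Hxs _ => y yxs; apply: (Vxs y _).2; rewrite in_cons yxs orbT.
Qed.

Definition short_sums (b : nat -> G) (r : nat) (x : G) : Prop :=
  exists l : seq nat, (size l <= r)%N /\ x = \sum_(i <- l) b i.

(* If b_n -> 0, the sums of at most r terms of b form a precompact set: a sum
   differs from its part over the indices below N by a sum of r small terms. *)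
Lemma precompact_short_sums (b : nat -> G) r :
  converges T b 0 -> precompact T (short_sums b r).
Proof.
move=> cb U TU U0; have [V [TV V0 HV]] := small_sums_nbhs r U TU U0.
have [N HN] := cb V TV V0.
exists [seq \sum_(i <- w) b i | w <- words (iota 0 N) r] => x [l [Hl ->]].
have size_filter_l P : (size (filter P l) <= r)%N.
  by rewrite size_filter; apply: leq_trans (count_size _ _) Hl.
exists (\sum_(i <- l | (i < N)%N) b i).
  rewrite -big_filter; apply: map_f; apply: mem_words => // i.
  by rewrite mem_filter mem_iota /= => /andP [].
rewrite (bigID (fun i => (i < N)%N)) /= addrC addrK -big_filter.
rewrite -(big_map b predT id); apply: HV; first by rewrite size_map.
by move=> y /mapP [i]; rewrite mem_filter -leqNgt => /andP [/HN Vbi _] ->.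
Qed.

End ShortSums.

Section BooleanDirectSum.
Context {G : zmodType} (a : nat -> G).
Hypothesis a2 : forall n, a n + a n = 0.
Variable g : G -> finset_nat.
Hypothesis gK : cancel (canon a) g.
Hypothesis Kg : cancel g (canon a).

Local Notation asum l := (\sum_(i <- l) a i).

(* The support of x: the unique strictly increasing list F with x = sum_F a. *)
Definition supp (x : G) : seq nat := sval (g x).

Lemma supp_sorted x : sorted ltn (supp x).
Proof. exact: proj2_sig (g x). Qed.

Lemma supp_uniq x : uniq (supp x).
Proof. exact: (sorted_uniq ltn_trans ltnn (supp_sorted x)). Qed.

Lemma supp_sum x : asum (supp x) = x.
Proof. exact: Kg. Qed.

(* G is a Boolean group: every element is a sum of the a_n. *)
Lemma oppB (x : G) : - x = x.
Proof.
rewrite -(supp_sum x) -sumrN; apply: eq_bigr => i _.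
by apply/eqP; rewrite eq_sym -subr_eq0 opprK a2.
Qed.

Lemma addBB (x : G) : x + x = 0.
Proof. by rewrite -{2}(oppB x) subrr. Qed.

Lemma supp_asum_sorted K : sorted ltn K -> supp (asum K) = K.
Proof. by move=> sK; rewrite /supp (_ : asum K = canon a (exist _ K sK)) ?gK. Qed.

Lemma asum_sorted_sublist l :
  exists K, [/\ sorted ltn K, asum K = asum l & {subset K <= l}].
Proof.
elim: l => [|i l [K [sK eK subK]]]; first by exists [::]; rewrite !big_nil.
have sub_cons j : j \in l -> j \in i :: l by rewrite in_cons orbC => ->.
have [iK | iNK] := boolP (i \in K).
  exists (rem i K); split.
  - by apply: subseq_sorted (rem_subseq i K) sK; apply: ltn_trans.
  - by rewrite big_cons -eK (perm_big _ (perm_to_rem iK)) big_cons addrA a2 add0r.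
  - by move=> j /mem_rem /subK /sub_cons.
exists (sort leq (i :: K)); split.
- rewrite ltn_sorted_uniq_leq sort_uniq sort_sorted ?andbT; last exact: leq_total.
  by rewrite /= iNK (sorted_uniq ltn_trans ltnn sK).
- by rewrite (perm_big _ (permEl (perm_sort leq _))) !big_cons eK.
- by move=> j; rewrite mem_sort in_cons => /orP [/eqP -> | /subK /sub_cons];
    rewrite ?mem_head.
Qed.

Lemma supp_asum_sub l : {subset supp (asum l) <= l}.
Proof.
by have [K [sK <- subK]] := asum_sorted_sublist l; rewrite supp_asum_sorted.
Qed.

Lemma size_supp_asum K : uniq K -> size (supp (asum K)) = size K.
Proof.
move=> uK; have sK : sorted ltn (sort leq K).
  by rewrite ltn_sorted_uniq_leq sort_uniq uK sort_sorted //; exact: leq_total.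
by rewrite -(perm_big _ (permEl (perm_sort leq K))) supp_asum_sorted ?size_sort.
Qed.

Lemma canonD_hamming (F H : finset_nat) :
  exists K, [/\ uniq K, size K = hamming F H & asum K = canon a F + canon a H].
Proof.
have [uF uH] : uniq (sval F) /\ uniq (sval H).
  by split; apply: (sorted_uniq ltn_trans ltnn); [case: F | case: H].
exists ([seq i <- sval F | i \notin sval H] ++
        [seq i <- sval H | i \notin sval F]).
have common : \sum_(i <- sval F | i \in sval H) a i =
              \sum_(i <- sval H | i \in sval F) a i.
  rewrite -[LHS]big_filter -[RHS]big_filter; apply/perm_big/uniq_perm.
  - exact: filter_uniq.
  - exact: filter_uniq.
  - by move=> j; rewrite !mem_filter andbC.
split.
- rewrite cat_uniq !filter_uniq //= andbT; apply/hasP => -[j].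
  by rewrite !mem_filter => /andP [jNF _] /andP [_ jF]; rewrite jF in jNF.
- by rewrite size_cat !size_filter.
rewrite /canon [in X in X + _](bigID (fun i => i \in sval H)).
rewrite [in X in _ + X](bigID (fun i => i \in sval F)) /= common.
by rewrite addrACA addBB add0r big_cat !big_filter.
Qed.

(* The basic neighbourhoods of 0 in tau(a_n) (Protasov-Zelenyuk): for
   n : nat -> nat, the sums of a_i in which, for every k, at most k indices
   are smaller than n k. *)
Definition tau_nbhs (n : nat -> nat) (x : G) : Prop :=
  exists s : seq nat, x = asum s /\ forall k, (count (fun i => i < n k) s <= k)%N.

Lemma tau_nbhs0 n : tau_nbhs n 0.
Proof. by exists [::]; rewrite big_nil. Qed.

Lemma tau_nbhsN n x : tau_nbhs n x -> tau_nbhs n (- x).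
Proof. by rewrite oppB. Qed.

(* Halving: bounding every count by k/2 makes the concatenation bounded by k. *)
Lemma tau_nbhs_half n :
  exists m, forall x y, tau_nbhs m x -> tau_nbhs m y -> tau_nbhs n (x + y).
Proof.
pose m j := \max_(i < (j + j).+2) n i; exists m.
move=> _ _ [s [-> Hs]] [t [-> Ht]]; exists (s ++ t); split; first by rewrite big_cat.
move=> k; have lt_k : (k < (k %/ 2 + k %/ 2).+2)%N by lia.
have le_n : (n k <= m (k %/ 2))%N by exact: (leq_bigmax (Ordinal lt_k)).
have half u : (forall j, count (fun i => i < m j) u <= j)%N ->
    (count (fun i => i < n k) u <= k %/ 2)%N.
  move=> Hu; apply: leq_trans (Hu _); apply: sub_count => i /= lt_i.
  exact: leq_trans lt_i le_n.
by rewrite count_cat; have := half _ Hs; have := half _ Ht; lia.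
Qed.

Lemma tau_nbhs_meet n n' :
  exists m, forall x, tau_nbhs m x -> tau_nbhs n x /\ tau_nbhs n' x.
Proof.
exists (fun k => maxn (n k) (n' k)) => _ [s [-> Hs]].
by split; exists s; split => // k; apply: leq_trans (Hs k);
  apply: sub_count => i /= /leq_trans; apply; rewrite ?leq_maxl ?leq_maxr.
Qed.

Lemma tau_nbhs_converges n : exists N, forall i, (N <= i)%N -> tau_nbhs n (a i).
Proof.
exists (n 0%N) => i le_i; exists [:: i]; split; first by rewrite big_seq1.
by case=> [|k] /=; rewrite addn0; [rewrite ltnNge le_i | case: (_ < _)%N].
Qed.

(* A nonzero z lies outside tau_nbhs n when n is constantly above its support,
   since that support is contained in every list of indices summing to z. *)
Lemma tau_nbhs_separates z : z != 0 -> exists n, ~ tau_nbhs n z.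
Proof.
move=> z0; have [i iz] : exists i, i \in supp z.
  case Ez: (supp z) => [|i F]; last by exists i; rewrite mem_head.
  by move: z0; rewrite -(supp_sum z) Ez big_nil eqxx.
exists (fun _ => (\max_(j <- supp z) j).+1) => -[s [zs /(_ 0%N)]].
rewrite leqn0 -(negbK (_ == 0)%N) -lt0n -has_count => /negP; apply; apply/hasP.
by exists i; [apply: supp_asum_sub; rewrite -zs | rewrite /= ltnS leq_bigmax_seq].
Qed.

Definition tau_top : (G -> Prop) -> Prop := nbhs_top tau_nbhs.

Lemma tau_top_group : group_topology tau_top.
Proof.
exact: (nbhs_top_group tau_nbhs (fun _ => 0%N) tau_nbhs0 tau_nbhsN
  tau_nbhs_half tau_nbhs_meet).
Qed.

Lemma tau_top_converges : converges tau_top a 0.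
Proof. exact: nbhs_top_converges tau_nbhs a tau_nbhs_converges. Qed.

Lemma T_sequence_a : T_sequence a.
Proof.
exists tau_top; split; [exact: tau_top_group | | exact: tau_top_converges].
exact: nbhs_top_hausdorff tau_nbhs tau_nbhs0 tau_nbhsN tau_nbhs_half
  tau_nbhs_separates.
Qed.

Lemma size_supp_shift x y t M : x = asum t + y ->
  {in supp x, forall i, i < M}%N ->
  (size (supp x) <= size (supp y) + count (fun i => i < M) t)%N.
Proof.
move=> Ex ltM; have Ex' : x = asum (t ++ supp y) by rewrite big_cat supp_sum.
have sub : {subset supp x <= t ++ supp y} by rewrite {1}Ex'; apply: supp_asum_sub.
rewrite -(count_predC (mem (supp y)) (supp x)) -!size_filter.
apply: leq_add; apply: uniq_leq_size; rewrite ?filter_uniq ?supp_uniq // => i.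
  by rewrite mem_filter => /andP [].
rewrite !mem_filter /= => /andP [iNy ix]; rewrite ltM //=.
by have := sub i ix; rewrite mem_cat (negbTE iNy) orbF.
Qed.

(* Precompact subsets of tau_top have supports of bounded size: otherwise pick
   X r in A with more than r support elements, and a neighbourhood tau_nbhs n
   with n k above the support of X (2k); finitely many translates cannot cover
   all the X (2k). *)
Lemma tau_top_precompact_bounded A : precompact tau_top A ->
  exists r, forall z, A z -> (size (supp z) <= r)%N.
Proof.
move=> pA; apply: NNPP => unbounded.
have large r : exists z, A z /\ (r < size (supp z))%N.
  apply: NNPP => Hr; apply: unbounded; exists r => z Az.
  by rewrite leqNgt; apply/negP => lt_r; apply: Hr; exists z.
pose X r := sval (constructive_indefinite_description _ (large r)).
have HX r : A (X r) /\ (r < size (supp (X r)))%N.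
  exact: proj2_sig (constructive_indefinite_description _ (large r)).
pose n k := (\max_(i <- supp (X (k + k)%N)) i).+1.
have [s Hs] := pA _ (nbhs_ball_open tau_nbhs tau_nbhs_half n 0)
                    (nbhs_ball_center tau_nbhs n 0).
pose L := \max_(y <- s) size (supp y); pose k := L.+1.
have [AX ltX] := HX (k + k)%N; have [y ys Hy] := Hs _ AX.
have [t [Et Ht]] : tau_nbhs n (X (k + k)%N - y).
  by have := nbhs_ballW tau_nbhs tau_nbhs0 Hy; rewrite subr0.
have le_y : (size (supp y) <= L)%N.
  exact: (leq_bigmax_seq (F := fun y => size (supp y)) y ys).
have le_X : (size (supp (X (k + k)%N)) <=
             size (supp y) + count (fun i => i < n k) t)%N.
  apply: size_supp_shift; first by rewrite -Et subrK.
  by move=> i iX; rewrite ltnS; apply: leq_bigmax_seq.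
by have := Ht k; lia.
Qed.

(* tau(a_n) is finer than tau_top, so its precompact sets are precompact
   for tau_top and thus have supports of bounded size. *)
Lemma tau_precompact_bounded {T A} : is_tau a T -> precompact T A ->
  exists r, forall z, A z -> (size (supp z) <= r)%N.
Proof.
move=> [_ _ finest] pA; apply: tau_top_precompact_bounded => U TU U0.
exact: pA (finest _ tau_top_group tau_top_converges _ TU) U0.
Qed.

(* Hamming r-balls are mapped into translates
   of the precompact set of sums of at most r of the a_n; conversely a
   translate of a precompact A is mapped into a Hamming r-ball when r bounds
   the support sizes of A, because canon F + canon H is supported on the
   symmetric difference of F and H. *)
Lemma canon_asymorphism T : is_tau a T ->
  asymorphism hamming_base (group_coarse_base T) (canon a).
Proof.
move=> tauT; have [gT cT _] := tauT; exists g; split => //.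
- move=> E [r Er]; exists (fun x y => exists2 z, short_sums a r z & x = z + y).
    by exists (short_sums a r); split => //; apply: precompact_short_sums.
  move=> F H /Er hFH; have [K [uK sK eK]] := canonD_hamming F H.
  exists (asum K); first by exists K; rewrite sK.
  by rewrite eK -addrA addBB addr0.
- move=> E [A [pA EA]]; have [r Ar] := tau_precompact_bounded tauT pA.
  exists (fun F H => hamming F H <= r)%N; first by exists r.
  move=> x y /EA [z Az ->].
  have [K [uK sK eK]] := canonD_hamming (g (z + y)) (g y).
  rewrite !Kg -addrA addBB addr0 in eK.
  by rewrite -sK -size_supp_asum // eK; apply: Ar.
Qed.

End BooleanDirectSum.

Theorem mainTheorem10 (G : zmodType) (a : nat -> G)
  (Ha2 : forall n, a n + a n = 0)
  (Hsum : bijective (canon a)) :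
  T_sequence a /\
  (forall T, is_tau a T ->
     asymorphism hamming_base (group_coarse_base T) (canon a)).
Proof.
have [g gK Kg] := Hsum.
split; first exact: T_sequence_a a Ha2 g gK Kg.
exact: canon_asymorphism a Ha2 g gK Kg.
Qed.
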